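(* Let $d_0 \geq 2$ and $n\ge 6$, and let $\mathcal{H}$ be a $[3]$-graph on $n$ vertices such that every pair $u,v$ of non-adjacent vertices satisfies $d_{\partial \mathcal{H}}(u) + d_{\partial \mathcal{H}}(v) \geq n + d_0$. Suppose $\mathcal{H}$ contains a Hamiltonian Berge path but no Hamiltonian Berge cycle. Then $\mathcal{H}$ contains a Berge cycle of length $n-1$ or $n-2$.
   Context: A $[3]$-graph is a hypergraph in which every edge has at most $3$ vertices. Two distinct vertices are adjacent if some edge contains both; $d_{\partial\mathcal{H}}(u)$ is the number of vertices adjacent to $u$. A Berge path of length $t$ is a sequence of $t$ distinct edges $e_1,\dots,e_t$ and $t+1$ distinct vertices $v_1,\dots,v_{t+1}$ with $\{v_i,v_{i+1}\}\subseteq e_i$ for all $i$; it is Hamiltonian if $\{v_1,\dots,v_{t+1}\}=V(\mathcal{H})$. A Berge cycle of length $t$ is a collection of $t$ distinct edges $e_1,\dots,e_t$ and $t$ distinct vertices $v_1,\dots,v_t$ with $\{v_i,v_{i+1}\}\subseteq e_i$ for all $i\in[t]$, where $v_{t+1}=v_1$; it is Hamiltonian if it has length $n$. *)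

From mathcomp Require Import all_boot.
Set Implicit Arguments. Unset Strict Implicit. Unset Printing Implicit Defensive.

Section Hyper.
Variable V : finType.
Definition hypergraph := {set {set V}}.

Definition is_3graph (E : hypergraph) : Prop := forall e, e \in E -> #|e| <= 3.

Definition adj (E : hypergraph) (u v : V) : bool :=
  (u != v) && [exists e in E, (u \in e) && (v \in e)].

(* degree in the shadow: number of vertices adjacent to u *)
Definition deg (E : hypergraph) (u : V) : nat := #|[set v | adj E u v]|.

Definition berge_path (E : hypergraph) (t : nat) (vs : seq V) (es : seq {set V}) : Prop :=
  [/\ size es = t, size vs = t.+1, uniq es & uniq vs] /\
  [/\ all (fun e => e \in E) es &
      forall i, i < t -> forall x0 e0,
        (nth x0 vs i \in nth e0 es i) /\ (nth x0 vs i.+1 \in nth e0 es i)].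

Definition hamiltonian_berge_path (E : hypergraph) : Prop :=
  exists t vs es, berge_path E t vs es /\ (forall v, v \in vs).

Definition berge_cycle (E : hypergraph) (t : nat) (vs : seq V) (es : seq {set V}) : Prop :=
  [/\ size es = t, size vs = t, uniq es & uniq vs] /\
  [/\ all (fun e => e \in E) es &
      forall i, i < t -> forall x0 e0,
        (nth x0 vs i \in nth e0 es i) /\ (nth x0 vs (i.+1 %% t) \in nth e0 es i)].

Definition has_berge_cycle_of_length (E : hypergraph) (t : nat) : Prop :=
  exists vs es, berge_cycle E t vs es.

Definition hamiltonian_berge_cycle (E : hypergraph) : Prop :=
  has_berge_cycle_of_length E #|V|.
End Hyper.

(* Write x_0 .. x_t (t = n - 1) for the vertices of the Hamiltonian Berge path
   and e_0 .. e_{t-1} for its edges.  Every cycle below joins two disjoint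
   segments x_p .. x_q and x_s .. x_r (q < s) of the path by two further distinct
   edges, one through x_q and x_r and one through x_s and x_p, that are not
   edges of the segments.  Since an edge has at most three vertices, an edge of
   the path containing two distinct path vertices x_a, x_b is e_j with j
   or j + 1 in {a, b}.
   If x_0 and x_t are adjacent, their common edge closes the path into a cycle,
   unless it is e_0 or e_{t-1}, in which case dropping x_0 or x_t leaves a cycle
   of length t.  Otherwise the degree condition (only deg x_0 + deg x_t > t is
   needed) and Posa's counting argument give an i with x_0 ~ x_{i+1} through an
   edge f and x_t ~ x_i through an edge g.  The cycle x_0 .. x_i x_t .. x_{i+1}
   may reuse f or g as a path edge other than e_i; by the observation above this
   is fixed by dropping at most one vertex next to each of f and g, so a cycle of
   length t + 1, t or t - 1 remains, and length t + 1 = n is excluded. *)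

From mathcomp Require Import all_boot zify.

Set Implicit Arguments.
Unset Strict Implicit.
Unset Printing Implicit Defensive.

Lemma mem_slice (T : eqType) (s : seq T) p m y : uniq s ->
  (y \in take m (drop p s)) = (y \in s) && (p <= index y s < p + m).
Proof.
move=> s_uniq; apply/idP/andP => [/(nthP y) [k k_lt <-] | [y_s idx_y]].
  have ltk : k < m /\ p + k < size s by move: k_lt; rewrite size_take size_drop; case: ifP; lia.
  rewrite nth_take ?nth_drop ?mem_nth ?index_uniq //; lia.
have idx_lt : index y s < size s by rewrite index_mem.
rewrite -(nth_index y y_s) (_ : index y s = p + (index y s - p)); last by lia.
rewrite -nth_drop -(nth_take (n0 := m)); last by lia.
by rewrite mem_nth // size_take size_drop; case: ifP; lia.
Qed.

(* [lia] gets very slow in contexts with membership hypotheses, which zify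
   tries to interpret; [arith] clears them first. *)
Ltac arith := repeat match goal with
  | H : context [in_mem _ _] |- _ => clear H
  | H : context [uniq _] |- _ => clear H
  end; lia.

Section BergePaths.
Variables (V : finType) (E : {set {set V}}).

Lemma adjP u v :
  reflect (u != v /\ exists h, [/\ h \in E, u \in h & v \in h]) (adj E u v).
Proof.
apply: (iffP andP) => [[uv /existsP [h /and3P [hE uh vh]]] | [uv [h [hE uh vh]]]].
  by split=> //; exists h.
by split=> //; apply/existsP; exists h; rewrite hE uh vh.
Qed.

Lemma adjC u v : adj E u v = adj E v u.
Proof.
by apply/adjP/adjP => -[uv [h [hE uh vh]]]; (split; [rewrite eq_sym | exists h]).
Qed.

Lemma berge_path_rev t vs es :
  berge_path E t vs es -> berge_path E t (rev vs) (rev es).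
Proof.
case=> -[es_size vs_size es_uniq vs_uniq] [es_E incident].
split; first by rewrite !size_rev !rev_uniq.
split=> [|i lt_it x0 e0]; first by rewrite all_rev.
rewrite !nth_rev ?es_size ?vs_size ?ltnS ?(ltnW lt_it) //.
have -> : t.+1 - i.+1 = (t - i.+1).+1 by lia.
have -> : t.+1 - i.+2 = t - i.+1 by lia.
by have [] := incident (t - i.+1) ltac:(lia) x0 e0.
Qed.

Lemma berge_path_slice t vs es p q : berge_path E t vs es -> p <= q <= t ->
  berge_path E (q - p) (take (q - p).+1 (drop p vs)) (take (q - p) (drop p es)).
Proof.
case=> -[es_size vs_size es_uniq vs_uniq] [es_E incident] /andP [pq qt].
split; first by rewrite !size_takel ?size_drop ?es_size ?vs_size ?take_uniq ?drop_uniq //; lia.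
split=> [|i lt_iqp x0 e0].
  by apply/allP=> h /mem_take /mem_drop; apply: (allP es_E).
rewrite !nth_take ?nth_drop ?addnS ?ltnS ?(ltnW lt_iqp) //.
by apply: incident; lia.
Qed.

Lemma berge_cycle_join l1 l2 vs1 es1 vs2 es2 g f x0 :
  berge_path E l1 vs1 es1 -> berge_path E l2 vs2 es2 ->
  uniq (vs1 ++ vs2) -> uniq (es1 ++ g :: es2 ++ [:: f]) -> g \in E -> f \in E ->
  nth x0 vs1 l1 \in g -> nth x0 vs2 0 \in g -> nth x0 vs2 l2 \in f -> nth x0 vs1 0 \in f ->
  berge_cycle E (l1.+1 + l2.+1) (vs1 ++ vs2) (es1 ++ g :: es2 ++ [:: f]).
Proof.
case=> -[es1_size vs1_size _ _] [es1_E incident1].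
case=> -[es2_size vs2_size _ _] [es2_E incident2].
move=> vs_uniq es_uniq gE fE g1 g2 f2 f1.
split; first by rewrite !size_cat /= size_cat es1_size es2_size vs1_size vs2_size addnS addn1.
split=> [|i lt_iL y0 e0]; first by rewrite all_cat es1_E /= gE all_cat es2_E /= fE andbT.
rewrite !(set_nth_default x0 y0) ?size_cat ?vs1_size ?vs2_size ?ltn_mod ?addSn //.
have vs_left k : k <= l1 -> nth x0 (vs1 ++ vs2) k = nth x0 vs1 k.
  by move=> le_kl1; rewrite nth_cat vs1_size ltnS le_kl1.
have vs_right k : nth x0 (vs1 ++ vs2) (l1.+1 + k) = nth x0 vs2 k.
  by rewrite nth_cat vs1_size ltnNge leq_addr addKn.
have es_mid : nth e0 (es1 ++ g :: es2 ++ [:: f]) l1 = g.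
  by rewrite nth_cat es1_size ltnn subnn.
have es_right k : nth e0 (es1 ++ g :: es2 ++ [:: f]) (l1.+1 + k) = nth e0 (es2 ++ [:: f]) k.
  by rewrite nth_cat es1_size ltnNge addSnnS leq_addr addKn.
case: (ltngtP i l1) => [lt_il1 | gt_il1 | ->].
- have lt_iL1 : i.+1 < l1.+1 + l2.+1 by arith.
  rewrite modn_small // !vs_left ?nth_cat ?es1_size ?lt_il1 //; last exact: ltnW.
  by have [] := incident1 i lt_il1 x0 e0.
- have [j le_jl2 ->] : exists2 j, j <= l2 & i = l1.+1 + j by exists (i - l1.+1); arith.
  rewrite es_right [nth e0 (es2 ++ _) _]nth_cat es2_size vs_right.
  case: (ltngtP j l2) => [lt_jl2 | gt_jl2 | ->].
  + rewrite -addnS modn_small ?vs_right ?lt_jl2; last by rewrite ltn_add2l ltnS.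
    by have [] := incident2 j lt_jl2 x0 e0.
  + by rewrite ltnNge le_jl2 in gt_jl2.
  + by rewrite -addnS modnn vs_left // subnn.
- have lt_l1L : l1.+1 < l1.+1 + l2.+1 by arith.
  rewrite modn_small // vs_left // es_mid.
  by move: (vs_right 0); rewrite addn0 => ->.
Qed.
End BergePaths.

Section HamiltonianPath.
Variables (V : finType) (E : {set {set V}}) (t : nat) (vs : seq V) (es : seq {set V}).
Variable x0 : V.
Hypotheses (E3 : is_3graph E) (ham_path : berge_path E t vs es) (spanning : forall v, v \in vs).

Let x k := nth x0 vs k.
Let e k := nth set0 es k.

Let es_size : size es = t. Proof. by case: ham_path => -[]. Qed.
Let vs_size : size vs = t.+1. Proof. by case: ham_path => -[]. Qed.
Let es_uniq : uniq es. Proof. by case: ham_path => -[]. Qed.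
Let vs_uniq : uniq vs. Proof. by case: ham_path => -[]. Qed.

Let x_inj a b : a <= t -> b <= t -> (x a == x b) = (a == b).
Proof. by move=> le_at le_bt; rewrite nth_uniq ?vs_size. Qed.

Let e_inj a b : a < t -> b < t -> (e a == e b) = (a == b).
Proof. by move=> lt_at lt_bt; rewrite nth_uniq ?es_size. Qed.

Let e_in_E k : k < t -> e k \in E.
Proof. by case: ham_path => _ [es_E _] lt_kt; apply: (allP es_E); rewrite mem_nth ?es_size. Qed.

Let path_edge k : k < t -> x k \in e k /\ x k.+1 \in e k.
Proof. by case: ham_path => _ [_ incident] lt_kt; apply: incident. Qed.

Let e_index h : index h es < t -> e (index h es) = h.
Proof. by rewrite -es_size index_mem => /(nth_index set0). Qed.

Let index_e k : k < t -> index (e k) es = k.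
Proof. by move=> lt_kt; rewrite index_uniq ?es_size. Qed.

Lemma card_spanning_path : #|V| = t.+1.
Proof. by rewrite -vs_size -(card_uniqP vs_uniq); apply: eq_card => v; rewrite spanning. Qed.

Lemma cycle_of_two_segments p q s r g f :
  p <= q < s -> s <= r <= t -> g \in E -> f \in E -> g != f ->
  x q \in g -> x r \in g -> x s \in f -> x p \in f ->
  (forall k, (p <= k < q) || (s <= k < r) -> (e k != g) && (e k != f)) ->
  has_berge_cycle_of_length E ((q - p).+1 + (r - s).+1).
Proof.
move=> /andP [le_pq lt_qs] /andP [le_sr le_rt] gE fE gf xqg xrg xsf xpf avoid.
set vs1 := take (q - p).+1 (drop p vs); set vs2 := take (r - s).+1 (drop s vs).
set es1 := take (q - p) (drop p es); set es2 := take (r - s) (drop s es).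
have vs2_size : size vs2 = (r - s).+1 by rewrite size_takel // size_drop vs_size; arith.
have in_slice h a b : a <= b -> h \in take (b - a) (drop a es) ->
    exists2 k, a <= k < b & e k = h.
  move=> le_ab; rewrite mem_slice // subnKC // => /andP [h_es idx_h].
  by exists (index h es); rewrite // /e nth_index.
have avoid_slices h : (forall k, (p <= k < q) || (s <= k < r) -> e k != h) ->
    h \notin es1 ++ es2.
  move=> avoid_h; rewrite mem_cat negb_or.
  apply/andP; split; apply/negP => /in_slice [] // k k_in ekh;
    by case/negP: (avoid_h k ltac:(arith)); rewrite ekh.
exists (vs1 ++ rev vs2), (es1 ++ g :: rev es2 ++ [:: f]).
apply: (berge_cycle_join (x0 := x0)) gE fE _ _ _ _.
- by apply: berge_path_slice ham_path _; arith.
- by apply/berge_path_rev/(berge_path_slice ham_path); arith.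
- rewrite cat_uniq rev_uniq !take_uniq ?drop_uniq // andbT /=.
  apply/hasPn => y; rewrite mem_rev !mem_slice // => /andP [_ idx_y].
  by apply/negP => /andP [_]; arith.
- rewrite (perm_uniq (s2 := g :: f :: es1 ++ es2)); last first.
    by apply/permP => P; rewrite /= !count_cat /= count_cat count_rev /=; arith.
  rewrite /= inE negb_or gf !avoid_slices => [|k /avoid /andP [] //|k /avoid /andP [] //].
  rewrite cat_uniq !take_uniq ?drop_uniq //= andbT.
  apply/hasPn => y; rewrite !mem_slice // => /andP [_ idx_y].
  by apply/negP => /andP [_]; arith.
- by rewrite nth_take // nth_drop subnKC.
- by rewrite nth_rev vs2_size // subn1 nth_take // nth_drop subnKC.
- by rewrite nth_rev vs2_size // subnn nth_take // nth_drop addn0.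
- by rewrite nth_take // nth_drop addn0.
Qed.

Lemma path_edge_meets j a b : j < t -> a <= t -> b <= t -> a != b ->
  x a \in e j -> x b \in e j -> [|| j == a, j == b, j.+1 == a | j.+1 == b].
Proof.
move=> lt_jt le_at le_bt ab xa xb; apply: contraTT (E3 (e_in_E lt_jt)) => far.
have [xj xj1] := path_edge lt_jt.
rewrite -ltnNge; apply/card_geqP; exists [:: x a; x b; x j; x j.+1]; split=> //.
  by rewrite /= !inE !x_inj //; arith.
by move=> y; rewrite !inE => /or4P [] /eqP ->.
Qed.

Lemma cycle_of_adjacent_ends : 1 < t -> adj E (x 0) (x t) ->
  has_berge_cycle_of_length E t \/ has_berge_cycle_of_length E t.+1.
Proof.
move=> lt_1t /adjP [_ [h [hE h0 ht]]].
have [x_last_pred x_last] : x t.-1 \in e t.-1 /\ x t \in e t.-1.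
  by have := path_edge (k := t.-1) ltac:(arith); rewrite prednK; last arith.
have avoid_edges a b k : a < t -> b < t -> k < t -> k != a -> k != b ->
    (e k != e a) && (e k != e b).
  by move=> lt_at lt_bt lt_kt ka kb; rewrite !e_inj ?ka ?kb.
have [lt_jt | le_tj] := ltnP (index h es) t; last first.
  have e_ne_h k : k < t -> e k != h.
    by move=> lt_kt; apply: contraTneq le_tj => <-; rewrite index_e // -ltnNge.
  right; have -> : t.+1 = (t.-1 - 0).+1 + (t - t).+1 by arith.
  apply: (cycle_of_two_segments (p := 0) (q := t.-1) (s := t) (r := t)
            _ _ (e_in_E _) hE _ x_last_pred x_last ht h0); try arith.
  - by apply: e_ne_h; arith.
  - by move=> k k_lt; rewrite e_ne_h ?e_inj; arith.
move: (e_index lt_jt) h0 ht; move: (index h es) lt_jt => j lt_jt <- h0 ht.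
have [xj xj1] := path_edge lt_jt.
have meets := path_edge_meets lt_jt (leq0n t) (leqnn t) ltac:(arith) h0 ht.
have [j0 | j_last] : j = 0 \/ j = t.-1 by arith.
- left; have -> : t = (t.-1 - 1).+1 + (t - t).+1 by arith.
  rewrite j0 in ht xj1.
  apply: (cycle_of_two_segments (p := 1) (q := t.-1) (s := t) (r := t)
            _ _ (e_in_E _) (e_in_E _) _ x_last_pred x_last ht xj1); try arith.
  + by rewrite e_inj; arith.
  + by move=> k k_in; apply: avoid_edges; arith.
- left; have -> : t = (t.-2 - 0).+1 + (t.-1 - t.-1).+1 by arith.
  have [x_pen x_pen1] : x t.-2 \in e t.-2 /\ x t.-1 \in e t.-2.
    by have := path_edge (k := t.-2) ltac:(arith); rewrite (_ : t.-2.+1 = t.-1); last arith.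
  rewrite j_last in h0 xj.
  apply: (cycle_of_two_segments (p := 0) (q := t.-2) (s := t.-1) (r := t.-1)
            _ _ (e_in_E _) (e_in_E _) _ x_pen x_pen1 xj h0); try arith.
  + by rewrite e_inj; arith.
  + by move=> k k_in; apply: avoid_edges; arith.
Qed.

Section NonAdjacentEnds.
Hypotheses (lt_0t : 0 < t) (ends_nadj : ~~ adj E (x 0) (x t)).

Let ends_apart h : h \in E -> x 0 \in h -> x t \notin h.
Proof.
move=> hE h0; apply: contraNN ends_nadj => ht; apply/adjP.
by split; [rewrite x_inj; arith | exists h].
Qed.

Lemma head_chord_split i f : 0 < i -> i.+1 < t -> f \in E -> x 0 \in f -> x i.+1 \in f ->
  exists p s, [/\ p + s <= i.+2, i < s < t, x p \in f, x s \in f &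
                  forall k, (p <= k < i) || (s <= k < t) -> e k != f].
Proof.
move=> lt_0i lt_i1t fE f0 fi.
have only_j k : k < t -> e k = f -> k = index f es by move=> lt_kt <-; rewrite index_e.
move: (index f es) only_j (@e_index f) => j only_j ejf.
suff [p [s [ps st xp xs j_out]]] : exists p s, [/\ p + s <= i.+2, i < s < t, x p \in f,
    x s \in f & ~~ ((p <= j < i) || (s <= j < t))].
  exists p, s; split=> // k k_in; apply/eqP => ekf.
  by rewrite -(only_j k _ ekf) ?k_in in j_out; arith.
have [lt_jt | le_tj] := ltnP j t; last by exists 0, i.+1; split=> //; arith.
move/(_ lt_jt): ejf => ejf; have [xj xj1] := path_edge lt_jt; rewrite -ejf in f0 fi.
have meets := path_edge_meets lt_jt (leq0n t) (ltnW lt_i1t) ltac:(arith) f0 fi.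
rewrite ejf in xj xj1 f0 fi.
have [j0 | [ji1 | ji]] : j = 0 \/ j = i.+1 \/ j = i by arith.
- by exists 1, i.+1; rewrite j0 in xj1; split=> //; arith.
- have lt_i2t : i.+2 < t.
    rewrite ltn_neqAle lt_i1t andbT; apply: contraNneq (ends_apart fE f0) => <-.
    by rewrite -ji1.
  by exists 0, i.+2; rewrite ji1 in xj1; split=> //; arith.
- by exists 0, i.+1; split=> //; arith.
Qed.

Lemma tail_chord_split i g : 0 < i -> i.+1 < t -> g \in E -> x t \in g -> x i \in g ->
  exists q r, [/\ [&& 0 < q <= i, r <= t & i + t <= q + r.+1], x q \in g, x r \in g &
                  forall k, (k < q) || (i < k < r) -> e k != g].
Proof.
move=> lt_0i lt_i1t gE gt gi.
have only_j k : k < t -> e k = g -> k = index g es by move=> lt_kt <-; rewrite index_e.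
move: (index g es) only_j (@e_index g) => j only_j ejg.
suff [q [r [qr xq xr j_out]]] : exists q r, [/\ [&& 0 < q <= i, r <= t & i + t <= q + r.+1],
    x q \in g, x r \in g & ~~ ((j < q) || (i < j < r))].
  exists q, r; split=> // k k_in; apply/eqP => ekg.
  by rewrite -(only_j k _ ekg) ?k_in in j_out; arith.
have [lt_jt | le_tj] := ltnP j t; last by exists i, t; split=> //; arith.
move/(_ lt_jt): ejg => ejg; have [xj xj1] := path_edge lt_jt; rewrite -ejg in gt gi.
have meets := path_edge_meets lt_jt (leqnn t) (ltnW (ltnW lt_i1t)) ltac:(arith) gt gi.
rewrite ejg in xj xj1 gt gi.
have [j_last | [ji1 | ji]] : j = t.-1 \/ j.+1 = i \/ j = i by arith.
- by exists i, t.-1; rewrite j_last in xj; split=> //; arith.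
- have lt_1i : 1 < i.
    rewrite ltnNge; apply: contraTN gt => le_i1; apply: ends_apart gE _.
    by rewrite (_ : 0 = j) //; arith.
  by exists j, t; split=> //; arith.
- by exists i, t; split=> //; arith.
Qed.

Lemma crossing_neighbours : t < deg E (x 0) + deg E (x t) ->
  exists i, [/\ 0 < i, i.+1 < t, adj E (x 0) (x i.+1) & adj E (x t) (x i)].
Proof.
move=> deg_sum.
pose N0 := [set v | adj E (x 0) v]; pose Nt := [set v | adj E (x t) v].
pose pred v := x (index v vs).-1.
have x_index v : x (index v vs) = v by rewrite /x nth_index.
have index_le v : index v vs <= t by rewrite -ltnS -vs_size index_mem.
have index_N0 v : v \in N0 -> 0 < index v vs.
  rewrite inE lt0n; apply: contraTneq => idx0.
  by rewrite -(x_index v) idx0 /adj eqxx.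
have pred_inj : {in N0 &, injective pred}.
  move=> v w /index_N0 v0 /index_N0 w0 /eqP.
  rewrite x_inj ?(leq_trans (leq_pred _) (index_le _)) // => /eqP idx.
  by rewrite -[v]x_index -[w]x_index (_ : index v vs = index w vs) //; arith.
have pred_sub : pred @: N0 \subset [set~ x t].
  apply/subsetP => _ /imsetP [v /index_N0 v0 ->]; move: (index_le v) => le_vt.
  by rewrite !inE x_inj; arith.
have Nt_sub : Nt \subset [set~ x t].
  by apply/subsetP => v; rewrite !inE; apply: contraTneq => ->; rewrite /adj eqxx.
have : 0 < #|pred @: N0 :&: Nt|.
  have le_Ut : #|pred @: N0 :|: Nt| <= #|[set~ x t]|.
    by apply: subset_leq_card; rewrite subUset pred_sub.
  rewrite cardsC1 card_spanning_path /= in le_Ut.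
  have := cardsUI (pred @: N0) Nt; rewrite card_in_imset //.
  move: deg_sum => /[swap] <-; rewrite lt0n; apply: contraTneq => I0.
  by rewrite I0 addn0 -leqNgt.
case/card_gt0P => _ /setIP [/imsetP [v vN0 ->] wNt].
have idx_pos := index_N0 v vN0; rewrite !inE in vN0 wNt.
have x_succ : x (index v vs).-1.+1 = v by rewrite prednK.
exists (index v vs).-1; split=> //; last by rewrite x_succ.
  rewrite lt0n; apply: contraNneq ends_nadj => idx1.
  by rewrite adjC; move: wNt; rewrite /pred idx1.
rewrite prednK // ltn_neqAle index_le andbT; apply: contraNneq ends_nadj => idxt.
by rewrite -idxt x_index.
Qed.

Lemma cycle_of_crossing i : 0 < i -> i.+1 < t ->
  adj E (x 0) (x i.+1) -> adj E (x t) (x i) ->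
  exists2 L, t.-1 <= L <= t.+1 & has_berge_cycle_of_length E L.
Proof.
move=> lt_0i lt_i1t /adjP [_ [f [fE f0 fi]]] /adjP [_ [g [gE gt gi]]].
have [p [s [ps st xp xs avoid_f]]] := head_chord_split lt_0i lt_i1t fE f0 fi.
have [q [r [qr xq xr avoid_g]]] := tail_chord_split lt_0i lt_i1t gE gt gi.
have gf : g != f by apply: contraNneq (ends_apart fE f0) => <-.
exists ((q - p).+1 + (r - s).+1); first by arith.
apply: cycle_of_two_segments xq xr xs xp _ => //; [arith | arith |].
by move=> k k_in; rewrite avoid_g ?avoid_f //; arith.
Qed.

End NonAdjacentEnds.

Lemma long_cycle_of_hamiltonian_path : 1 < t ->
  (forall u v, u != v -> ~~ adj E u v -> t < deg E u + deg E v) ->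
  exists2 L, t.-1 <= L <= t.+1 & has_berge_cycle_of_length E L.
Proof.
move=> lt_1t ore.
have lt_0t : 0 < t := ltnW lt_1t.
have [ends_adj | ends_nadj] := boolP (adj E (x 0) (x t)).
  case: (cycle_of_adjacent_ends lt_1t ends_adj) => cycle; [exists t | exists t.+1] => //.
    by rewrite leq_pred leqnSn.
  by rewrite leqnn andbT (leq_trans (leq_pred t)).
have x0t : x 0 != x t by rewrite x_inj; arith.
have [i [lt_0i lt_i1t adj0 adjt]] := crossing_neighbours lt_0t ends_nadj (ore _ _ x0t ends_nadj).
exact: cycle_of_crossing adj0 adjt.
Qed.

End HamiltonianPath.

Theorem claim2p1 (V : finType) (E : {set {set V}}) (d0 n : nat) :
  2 <= d0 -> 6 <= n -> #|V| = n ->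
  is_3graph E ->
  (forall u v : V, u != v -> ~~ adj E u v -> n + d0 <= deg E u + deg E v) ->
  hamiltonian_berge_path E ->
  ~ hamiltonian_berge_cycle E ->
  has_berge_cycle_of_length E (n - 1) \/ has_berge_cycle_of_length E (n - 2).
Proof.
move=> d0_ge2 n_ge6 card_V E3 ore [t [vs [es [ham_path spanning]]]] no_ham.
have n_eq : n = t.+1 by rewrite -card_V (card_spanning_path ham_path spanning).
have [x0 _] : exists x0 : V, x0 \in V by apply/card_gt0P; rewrite card_V; arith.
have [|u v uv nadj|L L_range cycle] := long_cycle_of_hamiltonian_path x0 E3 ham_path spanning.
- by arith.
- by apply: leq_trans (ore u v uv nadj); arith.
have L_ne : L != t.+1.
  by apply: contra_not_neq no_ham => L_eq; rewrite /hamiltonian_berge_cycle card_V n_eq -L_eq.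
have [-> | ->] : n - 1 = L \/ n - 2 = L by arith.
  by left.
by right.
Qed.
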